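(* Let $A\in\{\mathbb Z,\mathbb R\}$ and let $X\subset\mathbb R^d$ be a bounded subset whose convex hull is full-dimensional. Then every $A$-$X$-free convex body in $\mathbb R^d$ is contained in a full-dimensional $A$-$X$-free convex body.
   Context: A convex body in $\mathbb R^d$ is a nonempty compact convex subset of $\mathbb R^d$. An $A$-unimodular transformation is a map $T(x)=Mx+b$ with $M\in \mathrm{GL}_d(\mathbb Z)$ and $b\in A^d$; an $A$-unimodular copy of $X$ is $T(X)$ for such a $T$. A convex set is $A$-$X$-free if its relative interior contains no $A$-unimodular copy of $X$ (the relative interior of a single point is that point). *)

From HB Require Import structures.
From mathcomp Require Import all_boot all_order all_algebra.
From mathcomp Require Import all_classical all_reals topology normedtype matrix_topology.
Set Implicit Arguments. Unset Strict Implicit. Unset Printing Implicit Defensive.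
Import Order.TTheory GRing.Theory Num.Theory numFieldNormedType.Exports.
Local Open Scope ring_scope.
Local Open Scope classical_set_scope.

Inductive transl_group := AZ | AR.

Definition inA (R : realType) (A : transl_group) (r : R) : Prop :=
  match A with AZ => exists z : int, r = z%:~R | AR => True end.

Definition convex_set (R : realType) (d : nat) (C : set 'cV[R]_d) : Prop :=
  forall x y t, C x -> C y -> 0 <= t -> t <= 1 -> C (t *: x + (1 - t) *: y).

Definition convex_body (R : realType) (d : nat) (K : set 'cV[R]_d) : Prop :=
  K !=set0 /\ compact K /\ convex_set K.

Definition conv_hull (R : realType) (d : nat) (S : set 'cV[R]_d) : set 'cV[R]_d :=
  [set y | exists n (p : 'I_n -> 'cV[R]_d) (w : 'I_n -> R),
     (forall i, S (p i)) /\ (forall i, 0 <= w i) /\ \sum_(i < n) w i = 1 /\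
     y = \sum_(i < n) w i *: p i].

Definition aff_hull (R : realType) (d : nat) (S : set 'cV[R]_d) : set 'cV[R]_d :=
  [set y | exists n (p : 'I_n -> 'cV[R]_d) (w : 'I_n -> R),
     (forall i, S (p i)) /\ \sum_(i < n) w i = 1 /\
     y = \sum_(i < n) w i *: p i].

Definition full_dim (R : realType) (d : nat) (S : set 'cV[R]_d) : Prop :=
  aff_hull S = setT.

Definition relint (R : realType) (d : nat) (C : set 'cV[R]_d) : set 'cV[R]_d :=
  [set x | C x /\ exists2 e : R, 0 < e &
     forall y, aff_hull C y -> (forall i : 'I_d, `|y i 0 - x i 0| < e) -> C y].

(* GL_d(Z): integer matrices invertible over Z (determinant +-1) *)
Definition GLZ (d : nat) (M : 'M[int]_d) : Prop := M \in unitmx.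

Definition unimod_map (R : realType) (d : nat) (M : 'M[int]_d) (b : 'cV[R]_d)
  (x : 'cV[R]_d) : 'cV[R]_d := map_mx intr M *m x + b.

Definition X_free (R : realType) (d : nat) (A : transl_group)
  (X : set 'cV[R]_d) (C : set 'cV[R]_d) : Prop :=
  ~ exists (M : 'M[int]_d) (b : 'cV[R]_d),
      GLZ M /\ (forall i, inA A (b i 0)) /\ unimod_map M b @` X `<=` relint C.

(* If K is full-dimensional, it is its own enlargement.  Otherwise K lies in an
   affine hyperplane [vdot y u = c] and we thicken it to the slab
   [|y| <= r, |vdot y u - c| <= e], a full-dimensional convex body containing K.
   A thin enough slab contains no unimodular copy of X at all: choose x0 and
   x_1, ..., x_d in X whose differences x_i - x0 form an invertible matrix P.
   If T x = M x + b maps X into the slab, the rows of Q = P M^T are the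
   differences T x_i - T x0, so the entries of Q are at most 2r and those of
   Q u at most 2e, while |det Q| = |det P| because M is in GL_d(Z).  Cramer's
   rule then bounds |det P| |u_i| by a multiple of e. *)

From mathcomp Require Import all_boot all_order all_algebra.
From mathcomp Require Import all_classical all_reals topology normedtype matrix_topology.
From mathcomp Require Import zify lra.
Import Order.TTheory GRing.Theory Num.Theory numFieldNormedType.Exports.
Set Implicit Arguments. Unset Strict Implicit. Unset Printing Implicit Defensive.
Local Open Scope ring_scope.
Local Open Scope classical_set_scope.

Section MatrixNorm.
Variable R : realDomainType.

Lemma mx_norm_entry_le m n (M : 'M[R]_(m, n)) i j : `|M i j| <= `|M|.
Proof.
rewrite [leRHS]/Num.norm /= mx_normrE.
by apply/bigmax_geP; right; exists (i, j).
Qed.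

Lemma mx_norm_le_entries m n (M : 'M[R]_(m, n)) (B : R) :
  0 <= B -> (forall i j, `|M i j| <= B) -> `|M| <= B.
Proof.
by move=> B0 MB; rewrite [leLHS]/Num.norm /= mx_normrE; apply: bigmax_le.
Qed.

Lemma mx_norm_trmx m n (M : 'M[R]_(m, n)) : `|M^T| = `|M|.
Proof.
apply/eqP; rewrite eq_le; apply/andP; split; apply: mx_norm_le_entries => // i j.
  by rewrite mxE mx_norm_entry_le.
by have := mx_norm_entry_le M^T j i; rewrite mxE.
Qed.

End MatrixNorm.

Lemma det_norm_le (R : numDomainType) n (A : 'M[R]_n) (B : R) :
  0 <= B -> (forall i j, `|A i j| <= B) -> `|\det A| <= n`!%:R * B ^+ n.
Proof.
move=> B0 AB; rewrite /determinant; apply: le_trans (ler_norm_sum _ _ _) _.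
rewrite -(perm.card_Sn n) mulr_natl -sumr_const; apply: ler_sum => s _.
rewrite normrM normr_sign mul1r normr_prod -[n in B ^+ n]card_ord -prodr_const.
by apply: ler_prod => i _; rewrite normr_ge0 AB.
Qed.

(* Cramer's rule: [\det Q *: u = \adj Q *m (Q *m u)]. *)
Lemma det_scale_norm_le (R : numFieldType) n (Q : 'M[R]_n) (u : 'cV[R]_n)
    (B e : R) i :
  0 <= B -> (forall i j, `|Q i j| <= B) -> (forall j, `|(Q *m u) j 0| <= e) ->
  `|\det Q * u i 0| <= n%:R * ((n.-1)`!%:R * B ^+ n.-1) * e.
Proof.
move=> B0 QB Que.
have -> : \det Q * u i 0 = \sum_j \adj Q i j * (Q *m u) j 0.
  have /matrixP/(_ i 0) : \adj Q *m (Q *m u) = \det Q *: u.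
    by rewrite mulmxA mul_adj_mx mul_scalar_mx.
  by rewrite !mxE => <-.
apply: le_trans (ler_norm_sum _ _ _) _.
rewrite -mulrA mulr_natl -[in X in _ *+ X](card_ord n) -sumr_const.
apply: ler_sum => j _; rewrite normrM; apply: ler_pM => //.
rewrite mxE /cofactor normrM normr_sign mul1r; apply: det_norm_le => // a b.
by rewrite !mxE.
Qed.

Lemma GLZ_det_intr (R : numDomainType) d (M : 'M[int]_d) :
  GLZ M -> `|\det (map_mx (intr : int -> R) M)| = 1.
Proof.
rewrite /GLZ unitmxE (det_map_mx (intr : {rmorphism int -> R})) qualifE.
by case/orP=> /eqP->; rewrite ?rmorphN rmorph1 ?normrN normr1.
Qed.

Lemma row_free_col_mx_rV (F : fieldType) k n (P : 'M[F]_(k, n)) (s : 'rV[F]_n) :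
  row_free P -> ~~ (s <= P)%MS -> row_free (col_mx P s).
Proof.
move=> /eqP freeP sNP; rewrite /row_free -addsmxE eqn_leq.
rewrite (leq_trans (mxrank_adds_leqif P s)) ?rank_rV ?freeP ?leq_add2l ?leq_b1 //=.
rewrite addn1 -[X in (X < _)%N]freeP; apply: rank_ltmx.
by rewrite ltmxE addsmxSl addsmx_sub submx_refl.
Qed.

Lemma exists_row_basis (F : fieldType) n (S : set 'rV[F]_n) :
  exists k (P : 'M[F]_(k, n)),
    [/\ forall i, S (row i P), row_free P & forall s, S s -> (s <= P)%MS].
Proof.
suff grow : forall m k (P : 'M_(k, n)), (n - k <= m)%N -> (forall i, S (row i P)) ->
    row_free P -> exists k' (P' : 'M_(k', n)),
    [/\ forall i, S (row i P'), row_free P' & forall s, S s -> (s <= P')%MS].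
  apply: (grow n 0%N 0) => [|[]//|]; first by rewrite subn0.
  by rewrite /row_free -leqn0 rank_leq_row.
elim=> [|m IH] k P nk SP freeP.
  exists k, P; split=> // s _; apply: submx_full.
  have := rank_leq_col P; rewrite /row_full (eqP freeP); lia.
have [spanP|] := pselect (forall s, S s -> (s <= P)%MS); first by exists k, P.
case/existsNP=> s /not_implyP[Ss /negP sNP].
have freePs := row_free_col_mx_rV freeP sNP.
apply: (IH _ _ _ _ freePs).
  by have := rank_leq_col (col_mx P s); rewrite (eqP freePs); lia.
move=> i; rewrite -(splitK i).
by case: (fintype.split i) => j; rewrite ?rowKu ?rowKd ?row_id.
Qed.

Section AffineHull.
Variables (R : realType) (d : nat).
Implicit Types S Y : set 'cV[R]_d.

Lemma conv_hull_sub_aff_hull S : conv_hull S `<=` aff_hull S.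
Proof. by move=> y [n [p [w [Sp [_ [w1 ->]]]]]]; exists n, p, w. Qed.

Lemma aff_hull_neq0 S y : aff_hull S y -> S !=set0.
Proof.
case=> [[|n] [p [w [Sp [w1 _]]]]]; last by exists (p ord0).
by move: w1; rewrite big_ord0 => /eqP; rewrite eq_sym oner_eq0.
Qed.

Lemma aff_hull_sub_span k (P : 'M[R]_(k, d)) (x0 : 'cV[R]_d) S :
  (forall x, S x -> ((x - x0)^T <= P)%MS) ->
  forall y, aff_hull S y -> ((y - x0)^T <= P)%MS.
Proof.
move=> SP y [n [p [w [Sp [w1 ->]]]]].
have -> : \sum_i w i *: p i - x0 = \sum_i w i *: (p i - x0).
  under [RHS]eq_bigr do rewrite scalerBr.
  by rewrite sumrB -scaler_suml w1 scale1r.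
rewrite linear_sum; apply: summx_sub => i _.
by rewrite linearZ scalemx_sub ?SP.
Qed.

Lemma aff_hull_offset Y (x0 : 'cV[R]_d) k (p : 'I_k -> 'cV[R]_d) (c : 'I_k -> R) :
  Y x0 -> (forall j, Y (p j)) -> aff_hull Y (x0 + \sum_j c j *: (p j - x0)).
Proof.
move=> Yx0 Yp.
pose q i := if unlift ord0 i is Some j then p j else x0.
pose w i := if unlift ord0 i is Some j then c j else 1 - \sum_j c j.
exists k.+1, q, w; split; [|split].
- by move=> i; rewrite /q; case: (unlift ord0 i).
- rewrite big_ord_recl /w unlift_none.
  by under [X in _ + X]eq_bigr do rewrite fintype.liftK; rewrite subrK.
rewrite big_ord_recl /q /w unlift_none.
under [X in _ = _ + X]eq_bigr do rewrite fintype.liftK.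
under [X in _ + X = _]eq_bigr do rewrite scalerBr.
by rewrite sumrB -scaler_suml scalerBl scale1r addrAC addrA.
Qed.

Lemma full_dim_spanning Y (x0 : 'cV[R]_d) k (P : 'M[R]_(k, d)) :
  Y x0 -> (forall i, exists2 p, Y p & row i P = (p - x0)^T) ->
  (forall v : 'rV[R]_d, (v <= P)%MS) -> full_dim Y.
Proof.
move=> Yx0 rowsP spanP; apply/seteqP; split=> // y _.
have /choice[p pP] : forall i, exists p, Y p /\ row i P = (p - x0)^T.
  by move=> i; have [p] := rowsP i; exists p.
have /submxP[D yD] := spanP (y - x0)^T.
have <- : x0 + \sum_j D 0 j *: (p j - x0) = y.
  suff -> : \sum_j D 0 j *: (p j - x0) = y - x0 by rewrite subrKC.
  apply: trmx_inj; rewrite yD mulmx_sum_row linear_sum.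
  by apply: eq_bigr => j _; rewrite linearZ (pP j).2.
by apply: aff_hull_offset => // j; case: (pP j).
Qed.

Lemma full_dim_affine_frame X : full_dim (conv_hull X) ->
  exists x0 (P : 'M[R]_d), [/\ X x0, P \in unitmx &
    forall i, exists2 x, X x & row i P = (x - x0)^T].
Proof.
move=> fullX; have /aff_hull_neq0[z /conv_hull_sub_aff_hull/aff_hull_neq0[x0 Xx0]] :
  aff_hull (conv_hull X) 0 by rewrite fullX.
have [k [P [XP freeP spanP]]] := exists_row_basis [set (x - x0)^T | x in X].
have spanT (v : 'rV[R]_d) : (v <= P)%MS.
  have -> : v = (v^T + x0 - x0)^T by rewrite addrK trmxK.
  apply: (aff_hull_sub_span _ (S := conv_hull X)).
    move=> x /conv_hull_sub_aff_hull; apply: aff_hull_sub_span => x' Xx'.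
    by apply: spanP; exists x'.
  by rewrite fullX.
have kd : k = d.
  have : (\rank (1%:M : 'M[R]_d) <= \rank P)%N.
    by apply/mxrankS/row_subP => i; exact: spanT.
  by have := rank_leq_col P; rewrite mxrank1 (eqP freeP); lia.
subst k; exists x0, P; split=> //; first by rewrite -row_free_unit.
by move=> i; have [x Xx <-] := XP i; exists x.
Qed.

End AffineHull.

Definition vdot (R : ringType) n (y u : 'cV[R]_n) : R := (y^T *m u) 0 0.

Section VectorDot.
Variables (R : ringType) (n : nat).
Implicit Types y z u : 'cV[R]_n.

Lemma vdotDl y z u : vdot (y + z) u = vdot y u + vdot z u.
Proof. by rewrite /vdot linearD mulmxDl mxE. Qed.

Lemma vdotBl y z u : vdot (y - z) u = vdot y u - vdot z u.
Proof. by rewrite /vdot linearB mulmxBl !mxE. Qed.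

Lemma vdotZl a y u : vdot (a *: y) u = a * vdot y u.
Proof. by rewrite /vdot linearZ -scalemxAl mxE. Qed.

Lemma vdot_deltal i u : vdot (delta_mx i 0) u = u i 0.
Proof. by rewrite /vdot trmx_delta -rowE mxE. Qed.

End VectorDot.

Lemma vdot_norm_le (R : realDomainType) n (y u : 'cV[R]_n) :
  `|vdot y u| <= (\sum_i `|u i 0|) * `|y|.
Proof.
rewrite /vdot mxE mulr_suml; apply: le_trans (ler_norm_sum _ _ _) _.
by apply: ler_sum => i _; rewrite mxE normrM mulrC ler_wpM2l ?mx_norm_entry_le.
Qed.

Lemma sub_hyperplane_of_not_full_dim (R : realType) d (K : set 'cV[R]_d) k0 :
  K k0 -> ~ full_dim K ->
  exists2 u : 'cV[R]_d, u != 0 & forall y, K y -> vdot y u = vdot k0 u.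
Proof.
move=> Kk0 notfullK.
have [k [P [KP _ spanP]]] := exists_row_basis [set (y - k0)^T | y in K].
have [v vNP] : exists v : 'rV[R]_d, ~ (v <= P)%MS.
  apply/existsNP => spanT; apply/notfullK/(full_dim_spanning Kk0 _ spanT) => i.
  by have [y Ky <-] := KP i; exists y.
have /matrix0Pn[i [j coker_ij]] : cokermx P != 0.
  by apply: contra_notN vNP => /eqP coker0; rewrite submxE coker0 mulmx0.
exists (col j (cokermx P)).
  by apply/matrix0Pn; exists i, 0; rewrite mxE.
move=> y Ky; apply/eqP; rewrite -subr_eq0 -vdotBl /vdot.
have /submxP[D ->] := spanP _ (ex_intro2 _ _ y Ky erefl).
by rewrite colE -mulmxA (mulmxA P) mulmx_coker mul0mx mulmx0 mxE.
Qed.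

Section NormedSpace.
Variables (R : realType) (V W : normedModType R).

Lemma bounded_set_lt (A : set V) : bounded_set A -> exists r, forall x, A x -> `|x| < r.
Proof.
case=> M [Mreal AM]; have M1 : M < `|M| + 1.
  by rewrite (le_lt_trans (real_ler_norm Mreal)) // ltrDl.
by exists (`|M| + 2) => x Ax; rewrite (le_lt_trans (AM _ M1 x Ax)) // ltrD2l ltr1n.
Qed.

Lemma bounded_set_le (A : set V) (r : R) : (forall x, A x -> `|x| <= r) -> bounded_set A.
Proof.
move=> Ar; exists r; split=> [|M rM x Ax]; first exact: num_real.
exact/ltW/(le_lt_trans (Ar x Ax)).
Qed.

Lemma lipschitz_continuous (f : V -> W) (L : R) :
  0 < L -> (forall y z, `|f y - f z| <= L * `|y - z|) -> continuous f.
Proof.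
move=> L0 fL x s /= /(nbhs_ballP (f x)) [e e0 es].
apply/nbhs_ballP; exists (e / L); first by rewrite /= divr_gt0.
move=> y; rewrite -ball_normE /= => xy; apply: es; rewrite -ball_normE /=.
by rewrite (le_lt_trans (fL x y)) // mulrC -ltr_pdivlMr.
Qed.

Lemma convex_norm_le (a b : V) (r t : R) :
  `|a| <= r -> `|b| <= r -> 0 <= t -> t <= 1 -> `|t *: a + (1 - t) *: b| <= r.
Proof.
move=> ar br t0 t1; apply: le_trans (ler_normD _ _) _.
rewrite !normrZ !ger0_norm ?subr_ge0 //.
have : t * `|a| + (1 - t) * `|b| <= t * r + (1 - t) * r.
  by apply: lerD; apply: ler_wpM2l => //; rewrite subr_ge0.
by rewrite -mulrDl subrKC mul1r.
Qed.

End NormedSpace.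

Lemma trmx_continuous (R : realType) m n : continuous (fun M : 'M[R]_(m, n) => M^T).
Proof.
move=> M s /= /(nbhs_ballP (M^T)) [e e0 es].
by apply/nbhs_ballP; exists e => //= N [_ MN]; apply: es; split => // i j; rewrite !mxE.
Qed.

Lemma cV_bounded_closed_compact (R : realType) d (A : set 'cV[R]_d) :
  bounded_set A -> closed A -> compact A.
Proof.
move=> boundedA closedA.
have -> : A = trmx @` (trmx @^-1` A).
  by apply/seteqP; split=> [y Ay|_ [v Av <-] //]; exists y^T; rewrite /= ?trmxK.
apply: continuous_compact; first exact/continuous_subspaceT/trmx_continuous.
apply: bounded_closed_compact; last first.
  by apply: preimage_closed => // v _; exact: trmx_continuous.
case: boundedA => M [Mreal AM]; exists M; split=> // r Mr v Av.
by rewrite /= -mx_norm_trmx; exact: AM.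
Qed.

Section Slab.
Variables (R : realType) (d : nat).
Implicit Types (u y : 'cV[R]_d) (c r e : R).

Definition slab u c r e : set 'cV[R]_d :=
  [set y | `|y| <= r /\ `|vdot y u - c| <= e].

Lemma slab_convex u c r e : convex_set (slab u c r e).
Proof.
move=> y z t [yr ye] [zr ze] t0 t1; split; first exact: convex_norm_le.
have -> : vdot (t *: y + (1 - t) *: z) u - c =
    t * (vdot y u - c) + (1 - t) * (vdot z u - c).
  by rewrite vdotDl !vdotZl; lra.
exact: (@convex_norm_le _ R^o).
Qed.

Lemma slab_compact u c r e : compact (slab u c r e).
Proof.
apply: cV_bounded_closed_compact; first by apply: (bounded_set_le (r := r)) => y [].
have dist_cont : continuous (fun y => `|vdot y u - c|).
  apply: (@lipschitz_continuous _ _ R^o _ (\sum_i `|u i 0| + 1)) => [|y z].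
    by rewrite ltr_wpDl ?sumr_ge0.
  rewrite (le_trans (ler_dist_dist _ _)) // opprB addrA subrK -vdotBl.
  by rewrite (le_trans (vdot_norm_le _ _)) // ler_wpM2r // lerDl.
have -> : slab u c r e = ((fun y => `|y|) @^-1` [set x | x <= r]) `&`
    ((fun y => `|vdot y u - c|) @^-1` [set x | x <= e]) by [].
apply: closedI; (apply: preimage_closed; last exact: closed_le) => y _.
  exact: norm_continuous.
exact: dist_cont.
Qed.

Lemma slab_full_dim u c r e y0 :
  0 < e -> `|y0| < r -> vdot y0 u = c -> full_dim (slab u c r e).
Proof.
move=> e0 y0r y0c; pose L : R := \sum_i `|u i 0| + 1.
have L0 : 0 < L by rewrite ltr_wpDl ?sumr_ge0.
have uL i : `|u i 0| <= L.
  by rewrite /L (bigD1 i) //= -addrA lerDl addr_ge0 ?sumr_ge0.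
pose del : R := Num.min (r - `|y0|) (e / L).
have del0 : 0 < del by rewrite lt_min subr_gt0 y0r divr_gt0.
have slab_y0 : slab u c r e y0 by split; rewrite ?y0c ?subrr ?normr0 ltW.
apply: (full_dim_spanning slab_y0 (P := del *: 1%:M)) => [i|v]; last first.
  by rewrite (eqmx_scale _ (lt0r_neq0 del0)) submx1.
exists (y0 + del *: delta_mx i 0); last first.
  by rewrite addrC addKr !linearZ /= trmx_delta row1.
split => /=.
  rewrite (le_trans (ler_normD _ _)) // normrZ gtr0_norm //.
  have : `|delta_mx i 0 : 'cV[R]_d| <= 1.
    apply: mx_norm_le_entries => // a b.
    by rewrite mxE; case: (_ && _); rewrite ?normr1 ?normr0.
  move/(ler_wpM2l (ltW del0)); rewrite mulr1 -lerBrDl => /le_trans; apply.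
  by rewrite ge_min lexx.
rewrite vdotDl vdotZl vdot_deltal y0c addrC addKr normrM gtr0_norm //.
rewrite (le_trans (ler_wpM2l (ltW del0) (uL i))) // -ler_pdivlMr //.
by rewrite ge_min lexx orbT.
Qed.

Lemma slab_unimodular_copy_det_le (X : set 'cV[R]_d) x0 (P : 'M[R]_d)
    u c r e i (M : 'M[int]_d) (b : 'cV[R]_d) :
  X x0 -> (forall j, exists2 x, X x & row j P = (x - x0)^T) -> GLZ M ->
  unimod_map M b @` X `<=` slab u c r e ->
  `|\det P| * `|u i 0| <= d%:R * ((d.-1)`!%:R * (r + r) ^+ d.-1) * (e + e).
Proof.
move=> Xx0 rowP GLZM TX; set T := unimod_map M b.
have Tslab x : X x -> slab u c r e (T x) by move=> Xx; apply: TX; exists x.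
pose Q := P *m (map_mx intr M)^T.
have rowQ j : exists2 x, X x & row j Q = (T x - T x0)^T.
  have [x Xx Px] := rowP j; exists x => //.
  by rewrite /Q row_mul Px /T /unimod_map opprD addrACA subrr addr0 -mulmxBr trmx_mul.
have r0 : 0 <= r + r by rewrite addr_ge0 // (le_trans (normr_ge0 _) (Tslab x0 Xx0).1).
have -> : `|\det P| = `|\det Q| by rewrite det_mulmx det_tr normrM GLZ_det_intr ?mulr1.
rewrite -normrM.
apply: det_scale_norm_le => // [j l|j].
  have [x Xx Qx] := rowQ j; have -> : Q j l = row j Q 0 l by rewrite [RHS]mxE.
  rewrite Qx (le_trans (mx_norm_entry_le _ _ _)) // mx_norm_trmx.
  rewrite (le_trans (ler_normB _ _)) //.
  by rewrite lerD // ?(Tslab x Xx).1 ?(Tslab x0 Xx0).1.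
have [x Xx Qx] := rowQ j; have -> : (Q *m u) j 0 = vdot (T x - T x0) u.
  by rewrite /vdot -Qx -row_mul [RHS]mxE.
rewrite vdotBl.
have -> : vdot (T x) u - vdot (T x0) u = (vdot (T x) u - c) - (vdot (T x0) u - c).
  by rewrite opprB addrA subrK.
rewrite (le_trans (ler_normB _ _)) //.
by rewrite lerD // ?(Tslab x Xx).2 ?(Tslab x0 Xx0).2.
Qed.

End Slab.

Theorem lemma2p5 (R : realType) (d : nat) (A : transl_group) (X : set 'cV[R]_d) :
  bounded_set X -> full_dim (conv_hull X) ->
  forall K : set 'cV[R]_d, convex_body K -> X_free A X K ->
  exists K' : set 'cV[R]_d,
    [/\ convex_body K', full_dim K', X_free A X K' & K `<=` K'].
Proof.
move=> _ fullX K bodyK freeK; have [[k0 Kk0] [compactK _]] := bodyK.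
have [fullK|notfullK] := pselect (full_dim K); first by exists K; split.
have [u /matrix0Pn[i [j]]] := sub_hyperplane_of_not_full_dim Kk0 notfullK.
rewrite ord1 => ui0 Ku.
have [x0 [P [Xx0 unitP rowP]]] := full_dim_affine_frame fullX.
have [r Kr] := bounded_set_lt (compact_bounded compactK).
pose C : R := d%:R * ((d.-1)`!%:R * (r + r) ^+ d.-1).
have C0 : 0 <= C.
  by rewrite !mulr_ge0 ?exprn_ge0 ?addr_ge0 // (le_trans (normr_ge0 k0) (ltW (Kr _ Kk0))).
pose e := `|\det P| * `|u i 0| / (2 * (C + 1)).
have detP0 : \det P != 0 by rewrite -unitfE -unitmxE.
have e0 : 0 < e by rewrite divr_gt0 ?mulr_gt0 ?normr_gt0 ?ltr_wpDl.
have Kslab : K `<=` slab u (vdot k0 u) r e.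
  by move=> y Ky; split; rewrite ?Ku ?subrr ?normr0 ?ltW ?Kr.
exists (slab u (vdot k0 u) r e); split=> //.
- by split; [exists k0; exact: Kslab | split; [exact: slab_compact | exact: slab_convex]].
- exact: slab_full_dim e0 (Kr _ Kk0) erefl.
case=> M [b [GLZM [_ TX]]].
have := slab_unimodular_copy_det_le i Xx0 rowP GLZM (fun y Ty => (TX y Ty).1).
have : e * (2 * (C + 1)) = `|\det P| * `|u i 0|.
  by rewrite divfK // mulf_neq0 // ?lt0r_neq0 ?ltr_wpDl.
rewrite -/C; clearbody e C; nra.
Qed.
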